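(* Let $\mathbf A$ be a semisimple Pavelka algebra and $O\colon A\to A$ a closure operator. The following are equivalent: (i) $\mathbf r\cdot O(x)\le O(\mathbf r\cdot x)$ for all $x\in A$ and all constants $\mathbf r$; (ii) there exist a set $G$ and a fuzzy relation $I\colon\mathrm{Spec_M}\mathbf A\times G\to[0,1]$ (a fuzzy formal context $(\mathrm{Spec_M}\mathbf A,G,I)$) such that $n_{\mathbf A}(O(x))=h_I(d_I(n_{\mathbf A}(x)))$ for all $x\in A$.
   Context: An MV-algebra $(A;\oplus,\neg,0)$ carries derived operations $1=\neg0$, $x\cdot y=\neg(\neg x\oplus\neg y)$, $x\rightarrow y=\neg x\oplus y$, order $x\le y$ iff $\neg x\oplus y=1$. The standard MV-algebra is $[0,1]$ with $x\oplus y=\min\{x+y,1\}$, $\neg x=1-x$ (so $x\cdot y=\max\{0,x+y-1\}$, $x\rightarrow y=\min\{1,1-x+y\}$). A Pavelka algebra is $\mathbf A=(A;\oplus,\neg,\{\mathbf r\mid r\in[0,1]\cap\mathbb Q\})$ with $(A;\oplus,\neg,\mathbf 0)$ an MV-algebra, $\mathbf r\oplus\mathbf s=\mathbf t$ whenever $\min\{r+s,1\}=t$, $\neg\mathbf r=\mathbf s$ whenever $1-r=s$. Filters are filters of the MV-reduct; $\mathrm{Spec_M}\mathbf A$ is the set of maximal proper filters; for $F\in\mathrm{Spec_M}\mathbf A$, $\mathbf A/F$ embeds uniquely into $[0,1]$ and $x/F$ is identified with its image in $[0,1]$. Semisimple: MV-reduct is a subdirect product of simple MV-algebras. Natural embedding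 $n_{\mathbf A}\colon A\to[0,1]^{\mathrm{Spec_M}\mathbf A}$, $n_{\mathbf A}(x)(F)=x/F$. A closure operator is a monotone $O$ with $x\le O(x)$, $O(O(x))=O(x)$. For $I\colon M\times G\to[0,1]$ (with $M=\mathrm{Spec_M}\mathbf A$): $d_I\colon[0,1]^M\to[0,1]^G$, $d_I(x)(g)=\bigwedge_{m\in M}(x(m)\rightarrow I(m,g))$; $h_I\colon[0,1]^G\to[0,1]^M$, $h_I(y)(m)=\bigwedge_{g\in G}(y(g)\rightarrow I(m,g))$. *)

From Stdlib Require Import Reals QArith Qreals ClassicalEpsilon.
Open Scope R_scope.

Record MVAlg := {
  car :> Type;
  oplus : car -> car -> car;
  neg : car -> car;
  zero : car;
  mv_assoc : forall x y z, oplus (oplus x y) z = oplus x (oplus y z);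
  mv_comm : forall x y, oplus x y = oplus y x;
  mv_zero : forall x, oplus x zero = x;
  mv_negneg : forall x, neg (neg x) = x;
  mv_one : forall x, oplus x (neg zero) = neg zero;
  mv_luk : forall x y, oplus (neg (oplus (neg x) y)) y = oplus (neg (oplus (neg y) x)) x
}.

Section MVDerived.
Variable A : MVAlg.
Definition one : A := neg A (zero A).
Definition mvmul (x y : A) : A := neg A (oplus A (neg A x) (neg A y)).
Definition mvimp (x y : A) : A := oplus A (neg A x) y.
Definition mvle (x y : A) : Prop := oplus A (neg A x) y = one.

Definition is_filter (F : A -> Prop) : Prop :=
  F one /\ (forall x y, F x -> mvle x y -> F y) /\
  (forall x y, F x -> F y -> F (mvmul x y)).
Definition proper_filter (F : A -> Prop) : Prop := is_filter F /\ ~ F (zero A).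
Definition maximal_filter (F : A -> Prop) : Prop :=
  proper_filter F /\
  forall G, proper_filter G -> (forall x, F x -> G x) -> forall x, G x -> F x.

Definition simple_mv : Prop :=
  zero A <> one /\
  forall F, is_filter F -> (forall x, F x -> x = one) \/ (forall x, F x).
End MVDerived.

Definition mv_hom (A B : MVAlg) (f : A -> B) : Prop :=
  (forall x y, f (oplus A x y) = oplus B (f x) (f y)) /\
  (forall x, f (neg A x) = neg B (f x)) /\ f (zero A) = zero B.

(** Semisimple: A is (isomorphic to) a subdirect product of simple MV-algebras,
    i.e. there is a family of simple MV-algebras B_i and surjective
    homomorphisms f_i : A -> B_i which jointly separate points. *)
Definition semisimple_mv (A : MVAlg) : Prop :=
  exists (I : Type) (B : I -> MVAlg) (f : forall i, A -> B i),
    (forall i, simple_mv (B i)) /\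
    (forall i, mv_hom A (B i) (f i)) /\
    (forall i (b : B i), exists x, f i x = b) /\
    (forall x y, (forall i, f i x = f i y) -> x = y).

Definition inQ01 (r : Q) : Prop := 0 <= Q2R r <= 1.

Record Pavelka := {
  mvr :> MVAlg;
  cst : Q -> mvr;
  cst_zero : cst 0%Q = zero mvr;
  cst_oplus : forall r s t, inQ01 r -> inQ01 s -> inQ01 t ->
     Rmin (Q2R r + Q2R s) 1 = Q2R t -> oplus mvr (cst r) (cst s) = cst t;
  cst_neg : forall r s, inQ01 r -> inQ01 s ->
     1 - Q2R r = Q2R s -> neg mvr (cst r) = cst s
}.

Definition SpecM (A : MVAlg) : Type := {F : A -> Prop | maximal_filter A F}.

Definition unit_hom (A : MVAlg) (h : A -> R) : Prop :=
  (forall x, 0 <= h x <= 1) /\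
  (forall x y, h (oplus A x y) = Rmin (h x + h y) 1) /\
  (forall x, h (neg A x) = 1 - h x) /\ h (zero A) = 0.

(** For a maximal filter F, A/F embeds uniquely into [0,1]; the composite
    A -> A/F -> [0,1] is the unique homomorphism into [0,1] whose 1-set is F.
    x/F is the image of x under it. *)
Definition quot_val (A : MVAlg) (F : SpecM A) : A -> R :=
  epsilon (inhabits (fun _ : A => 0))
    (fun h => unit_hom A h /\ forall y, h y = 1 <-> proj1_sig F y).

Definition natemb (A : MVAlg) (x : A) : SpecM A -> R :=
  fun F => quot_val A F x.

Definition closure_op (A : MVAlg) (O : A -> A) : Prop :=
  (forall x y, mvle A x y -> mvle A (O x) (O y)) /\
  (forall x, mvle A x (O x)) /\
  (forall x, O (O x) = O x).

Definition Rimp (a b : R) : R := Rmin 1 (1 - a + b).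

Definition inf01 {X : Type} (f : X -> R) : R :=
  epsilon (inhabits 0) (fun r => 0 <= r <= 1 /\ (forall i, r <= f i) /\
    (forall s, 0 <= s <= 1 -> (forall i, s <= f i) -> s <= r)).

Definition dI {M G : Type} (I : M -> G -> R) (x : M -> R) : G -> R :=
  fun g => inf01 (fun m => Rimp (x m) (I m g)).
Definition hI {M G : Type} (I : M -> G -> R) (y : G -> R) : M -> R :=
  fun m => inf01 (fun g => Rimp (y g) (I m g)).

(* (i) => (ii): take G := A and I(F, g) := (O g)/F.  By semisimplicity, r <= d_I(n x)(g)
   for a constant r exactly when r.x <= O g; compatibility turns this into r.(O x) <= O g,
   which yields n(O x) <= h_I(d_I(n x)), and the attribute g := x gives the converse.
   (ii) => (i): h_I o d_I satisfies r.(h_I d_I a) <= h_I d_I (r.a) pointwise in [0,1]^M,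
   and semisimplicity transfers the inequality back to A.
   The values x/F come from the constants alone: x/F is the supremum of the r with
   r -> x in F, an MV-homomorphism into [0,1] because a maximal filter is prime. *)

From Stdlib Require Import Reals QArith Qreals.
From Stdlib Require Import ClassicalEpsilon Classical FunctionalExtensionality Lra Lia.
Open Scope R_scope.

Local Notation "x +' y" := (oplus _ x y) (at level 50, left associativity).
Local Notation "~' x" := (neg _ x) (at level 35, right associativity).

Section MVAlgebraFacts.
Variable A : MVAlg.
Implicit Types x y z u v : A.

Lemma oplus0l x : zero A +' x = x.
Proof. rewrite mv_comm. apply mv_zero. Qed.

Lemma oplus1l x : one A +' x = one A.
Proof. rewrite mv_comm. apply mv_one. Qed.

Lemma neg1 : ~' one A = zero A.
Proof. apply mv_negneg. Qed.

Lemma oplusNl x : ~' x +' x = one A.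
Proof.
  pose proof (mv_luk A (one A) x) as H.
  rewrite neg1, oplus0l in H. rewrite H. apply mv_one.
Qed.

Lemma oplusNr x : x +' ~' x = one A.
Proof. rewrite mv_comm. apply oplusNl. Qed.

Lemma mvle_refl x : mvle A x x.
Proof. apply oplusNl. Qed.

Lemma mvle_antisym x y : mvle A x y -> mvle A y x -> x = y.
Proof.
  unfold mvle; intros Hxy Hyx.
  pose proof (mv_luk A x y) as H. rewrite Hxy, Hyx, neg1, !oplus0l in H. now symmetry.
Qed.

Lemma mvleP x y : mvle A x y <-> exists z, y = x +' z.
Proof.
  unfold mvle; split.
  - intros H. pose proof (mv_luk A x y) as L. rewrite H, neg1, oplus0l in L.
    exists (~' (~' y +' x)). now rewrite mv_comm.
  - intros [z ->]. rewrite <- mv_assoc, oplusNl. apply oplus1l.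
Qed.

Lemma mvle_trans x y z : mvle A x y -> mvle A y z -> mvle A x z.
Proof.
  rewrite !mvleP. intros [u ->] [w ->]. exists (u +' w). apply mv_assoc.
Qed.

Lemma mvle_oplusr x y z : mvle A x y -> mvle A (x +' z) (y +' z).
Proof.
  rewrite !mvleP. intros [u ->]. exists u. rewrite !mv_assoc, (mv_comm _ u z). reflexivity.
Qed.

Lemma mvle_neg x y : mvle A x y -> mvle A (~' y) (~' x).
Proof. unfold mvle. rewrite mv_negneg, mv_comm. auto. Qed.

Lemma mvle_oplusl x y : mvle A x (y +' x).
Proof. apply mvleP. exists y. apply mv_comm. Qed.

Lemma mvle0x x : mvle A (zero A) x.
Proof. apply oplus1l. Qed.

Lemma mvlex1 x : mvle A x (one A).
Proof. apply mv_one. Qed.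

Lemma mvle0 x : mvle A x (zero A) -> x = zero A.
Proof. intros H. apply mvle_antisym; [exact H | apply mvle0x]. Qed.

Lemma mvle1 x : mvle A (one A) x -> x = one A.
Proof. intros H. apply mvle_antisym; [apply mvlex1 | exact H]. Qed.

Lemma neg_mvmul x y : ~' (mvmul A x y) = ~' x +' ~' y.
Proof. apply mv_negneg. Qed.

Lemma mvmulC x y : mvmul A x y = mvmul A y x.
Proof. unfold mvmul. now rewrite mv_comm. Qed.

Lemma mvmulA x y z : mvmul A (mvmul A x y) z = mvmul A x (mvmul A y z).
Proof. unfold mvmul. rewrite !mv_negneg, mv_assoc. reflexivity. Qed.

Lemma mvmul1 x : mvmul A x (one A) = x.
Proof. unfold mvmul. rewrite neg1, mv_zero. apply mv_negneg. Qed.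

Lemma mvmul1l x : mvmul A (one A) x = x.
Proof. rewrite mvmulC. apply mvmul1. Qed.

Lemma mvmulN x : mvmul A x (~' x) = zero A.
Proof. unfold mvmul. rewrite mv_negneg, oplusNl. apply neg1. Qed.

Lemma mvle_mulr x y z : mvle A x y -> mvle A (mvmul A x z) (mvmul A y z).
Proof. intros H. apply mvle_neg, mvle_oplusr, mvle_neg, H. Qed.

Lemma mvle_mul2 x y z u : mvle A x y -> mvle A z u -> mvle A (mvmul A x z) (mvmul A y u).
Proof.
  intros Hxy Hzu. apply mvle_trans with (mvmul A y z); [now apply mvle_mulr|].
  rewrite (mvmulC y z), (mvmulC y u). now apply mvle_mulr.
Qed.

Lemma mvmul_lel x y : mvle A (mvmul A x y) x.
Proof.
  unfold mvle. rewrite neg_mvmul, (mv_comm _ (~' x)), mv_assoc, oplusNl. apply mv_one.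
Qed.

Lemma mvle_residuation x y z : mvle A (mvmul A x y) z <-> mvle A x (mvimp A y z).
Proof. unfold mvle, mvimp. rewrite neg_mvmul, mv_assoc. tauto. Qed.

Lemma mvmul_imp x y : mvle A (mvmul A x (mvimp A x y)) y.
Proof. rewrite mvmulC. apply mvle_residuation, mvle_refl. Qed.

Lemma mvimp_trans x y z : mvle A (mvmul A (mvimp A x y) (mvimp A y z)) (mvimp A x z).
Proof.
  apply (proj1 (mvle_residuation _ _ _)). rewrite mvmulC, <- mvmulA.
  apply mvle_trans with (mvmul A y (mvimp A y z)); [|apply mvmul_imp].
  apply mvle_mulr, mvmul_imp.
Qed.

Lemma mvimp_oplusr x y z : mvle A (mvimp A x y) (mvimp A (x +' z) (y +' z)).
Proof.
  unfold mvimp.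
  assert (H : mvle A (~' x) (~' (x +' z) +' z)).
  { pose proof (mv_luk A (~' x) z) as L. rewrite mv_negneg in L. rewrite L. apply mvle_oplusl. }
  apply mvle_trans with (~' (x +' z) +' z +' y); [now apply mvle_oplusr|].
  rewrite !mv_assoc, (mv_comm _ z y). apply mvle_refl.
Qed.

Definition mvmeet x y := mvmul A x (~' x +' y).

Lemma neg_oplus_mvmeet x y : ~' x +' mvmeet x y = ~' x +' y.
Proof.
  unfold mvmeet, mvmul.
  rewrite mv_comm, (mv_comm _ (~' x) (~' (~' x +' y))).
  rewrite mv_luk, mv_negneg, <- (mv_assoc _ x), oplusNr, oplus1l, neg1. apply oplus0l.
Qed.

Lemma mvmeet_oplus_mvmul x y : mvmeet x y +' mvmul A (~' x) y = y.
Proof.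
  assert (Emeet : mvmeet x y = mvmul A y (~' y +' x)).
  { unfold mvmeet, mvmul. f_equal.
    pose proof (mv_luk A (~' y) (~' x)) as L. rewrite !mv_negneg in L.
    rewrite (mv_comm _ (~' x)), (mv_comm _ (~' y)), (mv_comm _ (~' x) y), (mv_comm _ (~' y) x).
    exact L. }
  assert (Emul : mvmul A (~' x) y = ~' (~' y +' x)).
  { unfold mvmul. rewrite mv_negneg, mv_comm. reflexivity. }
  rewrite Emeet, Emul. unfold mvmul at 1.
  rewrite mv_luk. rewrite <- Emul, mvmulC.
  pose proof (mvmul_lel y (~' x)) as Hle. unfold mvle in Hle. rewrite Hle, neg1. apply oplus0l.
Qed.

Lemma oplus_mvmul_absorb x y : x +' y +' mvmul A x y = x +' y.
Proof.
  pose proof (neg_oplus_mvmeet (~' x) y) as H1. pose proof (mvmeet_oplus_mvmul (~' x) y) as H2.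
  rewrite mv_negneg in H1, H2.
  rewrite <- H1, mv_assoc, H2, H1. reflexivity.
Qed.

Fixpoint mvpow x (n : nat) : A :=
  match n with O => one A | S n => mvmul A x (mvpow x n) end.

Lemma mvpowD x n m : mvpow x (n + m) = mvmul A (mvpow x n) (mvpow x m).
Proof. induction n as [|n IH]; simpl; [now rewrite mvmul1l | now rewrite IH, mvmulA]. Qed.

(* [~' u +' v = v] says that [u] or [v] is [1] in every linearly ordered quotient. *)
Lemma neg_oplus_fix_sym u v : ~' u +' v = v -> ~' v +' u = u.
Proof.
  intros H. pose proof (mv_luk A u v) as L. rewrite H, oplusNl in L.
  apply mvle_antisym; [unfold mvle; now rewrite <- L | apply mvle_oplusl].
Qed.

Lemma neg_oplus_fix_pow u v n : ~' u +' v = v -> ~' (mvpow u n) +' v = v.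
Proof.
  intros H. induction n as [|n IH]; simpl.
  - rewrite neg1. apply oplus0l.
  - rewrite neg_mvmul, mv_assoc, IH. exact H.
Qed.

Lemma mvimp_prelinear x y n m :
  mvpow (mvimp A x y) n +' mvpow (mvimp A y x) m = one A.
Proof.
  assert (H : ~' (mvimp A x y) +' mvimp A y x = mvimp A y x).
  { unfold mvimp. pose proof (oplus_mvmul_absorb x (~' y)) as E.
    unfold mvmul in E. rewrite !mv_negneg in E.
    rewrite mv_comm, (mv_comm _ (~' y) x). exact E. }
  apply (neg_oplus_fix_pow _ _ n), neg_oplus_fix_sym, (neg_oplus_fix_pow _ _ m),
    neg_oplus_fix_sym in H.
  rewrite <- H at 1. rewrite <- mv_assoc, oplusNr. apply oplus1l.
Qed.

End MVAlgebraFacts.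

Section Filters.
Variable A : MVAlg.
Variable F : A -> Prop.
Hypothesis HF : is_filter A F.
Implicit Types a b c d x : A.

Definition filter_le a b := F (mvimp A a b).

Lemma filter_le_of_mvle a b : mvle A a b -> filter_le a b.
Proof. destruct HF as [F1 _]. unfold filter_le, mvimp, mvle. intros ->. exact F1. Qed.

Lemma filter_le_trans a b c : filter_le a b -> filter_le b c -> filter_le a c.
Proof.
  destruct HF as [_ [F2 F3]]. intros Hab Hbc.
  eapply F2; [apply F3; [exact Hab | exact Hbc] | apply mvimp_trans].
Qed.

Lemma filter_le_oplus2 a b c d : filter_le a b -> filter_le c d -> filter_le (a +' c) (b +' d).
Proof.
  destruct HF as [_ [F2 _]]. intros Hab Hcd.
  apply filter_le_trans with (b +' c).
  - eapply F2; [exact Hab | apply mvimp_oplusr].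
  - rewrite (mv_comm _ b c), (mv_comm _ b d). eapply F2; [exact Hcd | apply mvimp_oplusr].
Qed.

Lemma filter_le_neg a b : filter_le a b -> filter_le (~' b) (~' a).
Proof. unfold filter_le, mvimp. rewrite mv_negneg, mv_comm. auto. Qed.

Lemma filter_le_mul2 a b c d : filter_le a b -> filter_le c d ->
  filter_le (mvmul A a c) (mvmul A b d).
Proof. intros Hab Hcd. apply filter_le_neg, filter_le_oplus2; now apply filter_le_neg. Qed.

Lemma filter_le_pow a b n : filter_le a b -> filter_le (mvpow A a n) (mvpow A b n).
Proof.
  intros Hab. induction n as [|n IH]; simpl.
  - apply filter_le_of_mvle, mvle_refl.
  - now apply filter_le_mul2.
Qed.

Lemma filter_pow x n : F x -> F (mvpow A x n).
Proof. destruct HF as [F1 [_ F3]]. intros Hx. induction n; simpl; auto. Qed.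

End Filters.

Section MaximalFilters.
Variable A : MVAlg.
Variable F : A -> Prop.
Hypothesis HM : maximal_filter A F.

(* The filter generated by [F] and [x] contains [0] exactly when some [~' x ^ n] lies in [F]. *)
Lemma maximal_filter_neg_pow x : ~ F x -> exists n, F (~' (mvpow A x n)).
Proof.
  destruct HM as [[[F1 [F2 F3]] Hproper] Hmax]. intros Hx.
  set (G := fun y => exists f n, F f /\ mvle A (mvmul A f (mvpow A x n)) y).
  assert (HG : is_filter A G).
  { split; [|split].
    - exists (one A), O. split; [exact F1|]. simpl. rewrite mvmul1. apply mvle_refl.
    - intros a b [f [n [Hf Hle]]] Hab. exists f, n. split; [exact Hf | eapply mvle_trans; eauto].
    - intros a b [f [n [Hf Hle]]] [g [m [Hg Hle']]]. exists (mvmul A f g), (n + m)%nat.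
      split; [now apply F3|]. rewrite mvpowD.
      replace (mvmul A (mvmul A f g) (mvmul A (mvpow A x n) (mvpow A x m)))
        with (mvmul A (mvmul A f (mvpow A x n)) (mvmul A g (mvpow A x m))).
      + now apply mvle_mul2.
      + rewrite !mvmulA. f_equal. rewrite <- !mvmulA. f_equal. apply mvmulC. }
  destruct (classic (G (zero A))) as [[f [n [Hf Hle]]] | HG0].
  - exists n. eapply F2; [exact Hf|].
    apply mvle_residuation in Hle. unfold mvimp in Hle. now rewrite mv_zero in Hle.
  - exfalso. apply Hx, (Hmax G); [split; [exact HG | exact HG0] | |].
    + intros y Hy. exists y, O. split; [exact Hy|]. simpl. rewrite mvmul1. apply mvle_refl.
    + exists (one A), 1%nat. split; [exact F1|]. simpl. rewrite mvmul1, mvmul1l. apply mvle_refl.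
Qed.

Lemma maximal_filter_total a b : filter_le A F a b \/ filter_le A F b a.
Proof.
  unfold filter_le.
  destruct (classic (F (mvimp A a b))) as [H|H]; [now left|].
  destruct (classic (F (mvimp A b a))) as [H'|H']; [now right|].
  exfalso. destruct (maximal_filter_neg_pow _ H) as [n Hn].
  destruct (maximal_filter_neg_pow _ H') as [m Hm].
  destruct HM as [[[_ [_ F3]] Hproper] _]. apply Hproper.
  pose proof (F3 _ _ Hn Hm) as X.
  unfold mvmul in X. rewrite !mv_negneg, mvimp_prelinear, neg1 in X. exact X.
Qed.

End MaximalFilters.

Ltac minmax_lra :=
  unfold Rmin, Rmax in *;
  repeat match goal with
  | |- context [Rle_dec ?a ?b] => destruct (Rle_dec a b)
  | H : context [Rle_dec ?a ?b] |- _ => destruct (Rle_dec a b)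
  end; lra.

Definition luk (a b : R) : R := Rmax 0 (a + b - 1).

Lemma Q2R_Qmake (z : Z) (p : positive) : Q2R (Qmake z p) = IZR z / INR (Pos.to_nat p).
Proof. unfold Q2R. simpl. rewrite INR_IZR_INZ, Znat.positive_nat_Z. reflexivity. Qed.

Lemma Q_dense (a b : R) : a < b -> exists q : Q, a < Q2R q < b.
Proof.
  intros Hab. destruct (archimed_cor1 (b - a)) as [N [HN HN0]]; [lra|].
  assert (HNR : 0 < INR N) by (apply lt_0_INR; lia).
  destruct (archimed (a * INR N)) as [H1 H2].
  exists (Qmake (up (a * INR N)) (Pos.of_nat N)).
  rewrite Q2R_Qmake, Nat2Pos.id by lia.
  set (z := IZR (up (a * INR N))) in *.
  assert (K : 1 < (b - a) * INR N).
  { apply Rmult_lt_compat_r with (r := INR N) in HN; [|exact HNR]. rewrite Rinv_l in HN; lra. }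
  split; apply (Rmult_lt_reg_r (INR N)); auto;
    replace (z / INR N * INR N) with z by (field; lra); nra.
Qed.

Section Constants.
Variable P : Pavelka.
Implicit Types c d : P.

Definition cst_val c (v : R) : Prop := exists r, inQ01 r /\ Q2R r = v /\ c = cst P r.

Lemma cst_val_cst r : inQ01 r -> cst_val (cst P r) (Q2R r).
Proof. intros Hr. exists r. auto. Qed.

Lemma cst_val_range c v : cst_val c v -> 0 <= v <= 1.
Proof. intros [r [Hr [<- _]]]. exact Hr. Qed.

Lemma cst_val_unique c d v : cst_val c v -> cst_val d v -> c = d.
Proof.
  intros [r [Hr [Er ->]]] [s [Hs [Es ->]]].
  rewrite <- (oplus0l _ (cst P r)), <- (cst_zero P).
  unfold inQ01 in *. apply cst_oplus; unfold inQ01; rewrite ?RMicromega.Q2R_0; try lra.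
  minmax_lra.
Qed.

Lemma cst_val_zero : cst_val (zero P) 0.
Proof. exists 0%Q. rewrite RMicromega.Q2R_0, cst_zero. unfold inQ01. split; [lra|auto]. Qed.

Lemma cst_val_neg c v : cst_val c v -> cst_val (~' c) (1 - v).
Proof.
  intros [r [Hr [<- ->]]]. unfold inQ01 in Hr.
  assert (E : Q2R (1 - r) = 1 - Q2R r) by now rewrite Q2R_minus, RMicromega.Q2R_1.
  exists (1 - r)%Q. unfold inQ01. rewrite E. split; [lra|split; [reflexivity|]].
  apply cst_neg; unfold inQ01; rewrite ?E; lra.
Qed.

Lemma cst_val_one : cst_val (one P) 1.
Proof. replace 1 with (1 - 0) by lra. apply cst_val_neg, cst_val_zero. Qed.

Lemma cst_val_oplus c d v w : cst_val c v -> cst_val d w -> cst_val (c +' d) (Rmin (v + w) 1).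
Proof.
  intros [r [Hr [<- ->]]] [s [Hs [<- ->]]]. unfold inQ01 in *.
  destruct (Rle_dec (Q2R r + Q2R s) 1) as [Hle|Hgt].
  - exists (r + s)%Q. rewrite Q2R_plus.
    assert (inQ01 (r + s)) by (unfold inQ01; rewrite Q2R_plus; lra).
    split; [auto|split; [minmax_lra|]].
    apply cst_oplus; auto; rewrite Q2R_plus; minmax_lra.
  - exists 1%Q. rewrite RMicromega.Q2R_1.
    assert (inQ01 1) by (unfold inQ01; rewrite RMicromega.Q2R_1; lra).
    split; [auto|split; [minmax_lra|]].
    apply cst_oplus; auto; rewrite RMicromega.Q2R_1; minmax_lra.
Qed.

Lemma cst_val_mvmul c d v w : cst_val c v -> cst_val d w -> cst_val (mvmul P c d) (luk v w).
Proof.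
  intros Hc Hd. pose proof (cst_val_range _ _ Hc). pose proof (cst_val_range _ _ Hd).
  replace (luk v w) with (1 - Rmin ((1 - v) + (1 - w)) 1) by (unfold luk; minmax_lra).
  apply cst_val_neg, cst_val_oplus; now apply cst_val_neg.
Qed.

Lemma cst_val_mvle c d v w : cst_val c v -> cst_val d w -> v <= w -> mvle P c d.
Proof.
  intros Hc Hd Hvw. pose proof (cst_val_range _ _ Hc). pose proof (cst_val_range _ _ Hd).
  apply (cst_val_unique _ _ 1); [|apply cst_val_one].
  replace 1 with (Rmin ((1 - v) + w) 1) by minmax_lra.
  apply cst_val_oplus; [now apply cst_val_neg | exact Hd].
Qed.

Lemma cst_val_pow c v n : cst_val c v -> cst_val (mvpow P c n) (Rmax 0 (1 - INR n * (1 - v))).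
Proof.
  intros Hc. pose proof (cst_val_range _ _ Hc). induction n as [|n IH]; simpl mvpow.
  - replace (Rmax 0 (1 - INR 0 * (1 - v))) with 1 by (simpl; minmax_lra). apply cst_val_one.
  - replace (Rmax 0 (1 - INR (S n) * (1 - v))) with (luk v (Rmax 0 (1 - INR n * (1 - v)))).
    + now apply cst_val_mvmul.
    + assert (0 <= INR n * (1 - v)) by (apply Rmult_le_pos; [apply pos_INR | lra]).
      rewrite S_INR. unfold luk. minmax_lra.
Qed.

Lemma cst_val_between a b : 0 <= a -> a < b -> b <= 1 -> exists c v, cst_val c v /\ a < v < b.
Proof.
  intros Ha Hab Hb. destruct (Q_dense a b Hab) as [q Hq].
  exists (cst P q), (Q2R q). split; [apply cst_val_cst; unfold inQ01; lra | exact Hq].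
Qed.

End Constants.

Section CutValue.
Variable P : Pavelka.
Variable F : P -> Prop.
Hypothesis HM : maximal_filter P F.
Implicit Types c d x y : P.

Let HF : is_filter P F := proj1 (proj1 HM).
Let Hproper : ~ F (zero P) := proj2 (proj1 HM).

(* The value of [x] in [A/F], as a Dedekind cut of the constants. *)
Definition cut_value x v := 0 <= v <= 1 /\ forall c u, cst_val P c u ->
  (u < v -> filter_le P F c x) /\ (v < u -> filter_le P F x c).

Lemma filter_le_cst_lt c d u w : cst_val P c u -> cst_val P d w -> w < u -> ~ filter_le P F c d.
Proof.
  intros Hc Hd Hlt Hcd. pose proof (cst_val_range _ _ _ Hc). pose proof (cst_val_range _ _ _ Hd).
  assert (Himp : cst_val P (mvimp P c d) (1 - (u - w))).
  { replace (1 - (u - w)) with (Rmin ((1 - u) + w) 1) by minmax_lra.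
    apply cst_val_oplus; [now apply cst_val_neg | exact Hd]. }
  destruct (INR_archimed (u - w) 1) as [n Hn]; [lra|].
  apply Hproper. replace (zero P) with (mvpow P (mvimp P c d) n).
  - now apply filter_pow.
  - apply (cst_val_unique P _ _ 0); [|apply cst_val_zero].
    replace 0 with (Rmax 0 (1 - INR n * (1 - (1 - (u - w))))) by minmax_lra.
    now apply cst_val_pow.
Qed.

Lemma cut_value_exists x : exists v, cut_value x v.
Proof.
  set (E := fun u => exists c, cst_val P c u /\ filter_le P F c x).
  assert (E0 : E 0).
  { exists (zero P). split; [apply cst_val_zero | apply filter_le_of_mvle, mvle0x; exact HF]. }
  destruct (completeness E) as [v [Hub Hlub]].
  - exists 1. intros u [c [Hc _]]. apply (cst_val_range _ _ _ Hc).
  - exists 0. exact E0.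
  - assert (Hv : 0 <= v <= 1).
    { split; [now apply Hub | apply Hlub; intros u [c [Hc _]]; apply (cst_val_range _ _ _ Hc)]. }
    exists v. split; [exact Hv|]. intros c u Hc. split; intros Hlt.
    + destruct (classic (exists w, E w /\ u < w)) as [[w [[d [Hd Hdx]] Huw]] | Hnone].
      * apply filter_le_trans with d; [exact HF | | exact Hdx].
        apply filter_le_of_mvle; [exact HF|]. apply (cst_val_mvle P _ _ _ _ Hc Hd). lra.
      * exfalso. assert (v <= u); [|lra].
        apply Hlub. intros w Ew. apply Rnot_lt_le. intros Hw. apply Hnone. eauto.
    + destruct (maximal_filter_total P F HM c x) as [H|H]; [|exact H].
      exfalso. assert (u <= v) by (apply Hub; exists c; auto). lra.
Qed.

Lemma cut_value_unique x v w : cut_value x v -> cut_value x w -> v = w.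
Proof.
  assert (Hsep : forall v w, cut_value x v -> cut_value x w -> v < w -> False).
  { intros v' w' [Hv Pv] [Hw Pw] Hlt.
    destruct (cst_val_between P v' ((v' + w') / 2)) as [c [u [Hc Hu]]]; try lra.
    destruct (cst_val_between P ((v' + w') / 2) w') as [d [u' [Hd Hu']]]; try lra.
    apply (filter_le_cst_lt d c u' u Hd Hc); [lra|].
    apply filter_le_trans with x; [exact HF | apply (Pw d u' Hd); lra | apply (Pv c u Hc); lra]. }
  intros Hv Hw. destruct (Rtotal_order v w) as [H|[H|H]]; [exfalso; eauto | exact H | exfalso; eauto].
Qed.

Lemma cut_value_below x v e : cut_value x v -> 0 < e ->
  exists c u, cst_val P c u /\ v - e < u /\ filter_le P F c x.
Proof.
  intros [Hv Pv] He. destruct (Rlt_dec (v - e) 0).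
  - exists (zero P), 0. split; [apply cst_val_zero|]. split; [lra|].
    apply filter_le_of_mvle; [exact HF | apply mvle0x].
  - destruct (cst_val_between P (v - e) v) as [c [u [Hc Hu]]]; try lra.
    exists c, u. split; [exact Hc|]. split; [lra | apply (Pv c u Hc); lra].
Qed.

Lemma cut_value_above x v e : cut_value x v -> 0 < e ->
  exists c u, cst_val P c u /\ u < v + e /\ filter_le P F x c.
Proof.
  intros [Hv Pv] He. destruct (Rlt_dec 1 (v + e)).
  - exists (one P), 1. split; [apply cst_val_one|]. split; [lra|].
    apply filter_le_of_mvle; [exact HF | apply mvlex1].
  - destruct (cst_val_between P v (v + e)) as [c [u [Hc Hu]]]; try lra.
    exists c, u. split; [exact Hc|]. split; [lra | apply (Pv c u Hc); lra].
Qed.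

Lemma cut_value_zero : cut_value (zero P) 0.
Proof.
  split; [lra|]. intros c u Hc. pose proof (cst_val_range _ _ _ Hc).
  split; intros Hlt; [lra|]. apply filter_le_of_mvle; [exact HF | apply mvle0x].
Qed.

Lemma cut_value_neg x v : cut_value x v -> cut_value (~' x) (1 - v).
Proof.
  intros [Hv Pv]. split; [lra|]. intros c u Hc.
  pose proof (cst_val_neg P _ _ Hc) as Hnc.
  split; intros Hlt; rewrite <- (mv_negneg P c); apply filter_le_neg; apply (Pv _ _ Hnc); lra.
Qed.

Lemma cut_value_oplus x y v w : cut_value x v -> cut_value y w ->
  cut_value (x +' y) (Rmin (v + w) 1).
Proof.
  intros Hx Hy. pose proof (proj1 Hx). pose proof (proj1 Hy).
  split; [minmax_lra|]. intros c u Hc. pose proof (cst_val_range _ _ _ Hc). split; intros Hlt.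
  - destruct (cut_value_below x v ((v + w - u) / 2) Hx) as [c1 [u1 [Hc1 [E1 L1]]]]; [minmax_lra|].
    destruct (cut_value_below y w ((v + w - u) / 2) Hy) as [c2 [u2 [Hc2 [E2 L2]]]]; [minmax_lra|].
    pose proof (cst_val_oplus P _ _ _ _ Hc1 Hc2) as H12.
    apply filter_le_trans with (c1 +' c2); [exact HF | | now apply filter_le_oplus2].
    apply filter_le_of_mvle; [exact HF|]. apply (cst_val_mvle P _ _ _ _ Hc H12).
    pose proof (cst_val_range _ _ _ Hc1). pose proof (cst_val_range _ _ _ Hc2). minmax_lra.
  - destruct (cut_value_above x v ((u - v - w) / 2) Hx) as [c1 [u1 [Hc1 [E1 L1]]]]; [minmax_lra|].
    destruct (cut_value_above y w ((u - v - w) / 2) Hy) as [c2 [u2 [Hc2 [E2 L2]]]]; [minmax_lra|].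
    pose proof (cst_val_oplus P _ _ _ _ Hc1 Hc2) as H12.
    apply filter_le_trans with (c1 +' c2); [exact HF | now apply filter_le_oplus2 |].
    apply filter_le_of_mvle; [exact HF|]. apply (cst_val_mvle P _ _ _ _ H12 Hc).
    pose proof (cst_val_range _ _ _ Hc1). pose proof (cst_val_range _ _ _ Hc2). minmax_lra.
Qed.

Lemma cut_value_one_iff x : cut_value x 1 <-> F x.
Proof.
  split.
  - intros [_ Px]. apply NNPP. intros Hx.
    destruct (maximal_filter_neg_pow P F HM x Hx) as [n Hn].
    set (q := / (INR n + 1)).
    assert (Hq : (INR n + 1) * q = 1) by (unfold q; field; pose proof (pos_INR n); lra).
    assert (Hq0 : 0 < q) by (unfold q; apply Rinv_0_lt_compat; pose proof (pos_INR n); lra).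
    destruct (cst_val_between P (1 - q) 1) as [c [u [Hc Hu]]]; [pose proof (pos_INR n); nra | lra | lra|].
    apply (filter_le_cst_lt _ _ _ _ (cst_val_pow P _ _ n Hc) (cst_val_zero P)).
    + assert (INR n * (1 - u) < 1); [pose proof (pos_INR n); nra | minmax_lra].
    + apply filter_le_trans with (mvpow P x n); [exact HF | |].
      * apply filter_le_pow; [exact HF | apply (Px c u Hc); lra].
      * unfold filter_le, mvimp. now rewrite mv_zero.
  - intros Hx. split; [lra|]. intros c u Hc. pose proof (cst_val_range _ _ _ Hc).
    split; intros Hlt; [|lra]. destruct HF as [_ [F2 _]].
    eapply F2; [exact Hx | apply mvle_oplusl].
Qed.

End CutValue.

Section UnitHomomorphisms.
Variable A : MVAlg.
Variable q : A -> R.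
Hypothesis Hq : unit_hom A q.

Lemma unit_hom_one : q (one A) = 1.
Proof. destruct Hq as [_ [_ [Hneg H0]]]. unfold one. rewrite Hneg, H0. lra. Qed.

Lemma unit_hom_mvmul a b : q (mvmul A a b) = luk (q a) (q b).
Proof.
  destruct Hq as [Hr [Hplus [Hneg _]]]. unfold mvmul, luk. rewrite Hneg, Hplus, !Hneg.
  pose proof (Hr a). pose proof (Hr b). minmax_lra.
Qed.

Lemma unit_hom_mvimp a b : q (mvimp A a b) = Rimp (q a) (q b).
Proof.
  destruct Hq as [_ [Hplus [Hneg _]]]. unfold mvimp, Rimp. rewrite Hplus, Hneg. apply Rmin_comm.
Qed.

Lemma unit_hom_mvle a b : mvle A a b -> q a <= q b.
Proof.
  intros Hab. pose proof (unit_hom_mvimp a b) as E. unfold mvle in Hab.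
  unfold mvimp in E. rewrite Hab, unit_hom_one in E.
  pose proof (proj1 Hq a). pose proof (proj1 Hq b). unfold Rimp in E. minmax_lra.
Qed.

End UnitHomomorphisms.

Section UnitHomConstants.
Variable P : Pavelka.
Variable q : P -> R.
Hypothesis Hq : unit_hom P q.
Variable p : positive.

Local Notation n := (Pos.to_nat p).
Local Notation frac k := (cst P (Qmake (Z.of_nat k) p)).

Lemma INR_Pos_to_nat_ge1 : 1 <= INR n.
Proof. apply (le_INR 1). lia. Qed.

Lemma cst_val_frac k : (k <= n)%nat -> cst_val P (frac k) (INR k / INR n).
Proof.
  intros Hk. apply le_INR in Hk. pose proof INR_Pos_to_nat_ge1. pose proof (pos_INR k).
  assert (E : Q2R (Qmake (Z.of_nat k) p) = INR k / INR n)
    by (rewrite Q2R_Qmake, <- INR_IZR_INZ; reflexivity).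
  rewrite <- E. apply cst_val_cst. unfold inQ01. rewrite E.
  split; [apply Rmult_le_pos; [lra | left; apply Rinv_0_lt_compat; lra]|].
  apply (Rmult_le_reg_r (INR n)); [lra|]. unfold Rdiv. rewrite Rmult_assoc, Rinv_l; lra.
Qed.

Lemma unit_hom_frac k : (k <= n)%nat -> q (frac k) = Rmin (INR k * q (frac 1%nat)) 1.
Proof.
  pose proof INR_Pos_to_nat_ge1. destruct Hq as [Hr [Hplus [_ H0]]].
  induction k as [|k IH]; intros Hk.
  - replace (frac 0%nat) with (zero P).
    + rewrite H0. simpl. minmax_lra.
    + apply (cst_val_unique P _ _ 0); [apply cst_val_zero|].
      replace 0 with (INR 0 / INR n) by (simpl; field; lra). apply cst_val_frac. lia.
  - replace (frac (S k)) with (frac k +' frac 1%nat).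
    + rewrite Hplus, IH by lia. rewrite S_INR. pose proof (Hr (frac 1%nat)).
      assert (0 <= INR k * q (frac 1%nat)) by (apply Rmult_le_pos; [apply pos_INR | lra]).
      minmax_lra.
    + apply (cst_val_unique P _ _ (INR (S k) / INR n)); [|apply cst_val_frac; lia].
      replace (INR (S k) / INR n) with (Rmin (INR k / INR n + INR 1 / INR n) 1).
      * apply cst_val_oplus; apply cst_val_frac; lia.
      * pose proof (cst_val_range _ _ _ (cst_val_frac (S k) Hk)).
        change (INR 1) with 1. rewrite (S_INR k) in *.
        replace (INR k / INR n + 1 / INR n) with ((INR k + 1) / INR n) by (field; lra).
        minmax_lra.
Qed.

Lemma unit_hom_frac1 : q (frac 1%nat) = / INR n.
Proof.
  pose proof INR_Pos_to_nat_ge1. destruct Hq as [Hr [_ [Hneg _]]].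
  assert (Eneg : ~' (frac 1%nat) = frac (n - 1)%nat).
  { apply (cst_val_unique P _ _ (1 - INR 1 / INR n)).
    - apply cst_val_neg, cst_val_frac. lia.
    - replace (1 - INR 1 / INR n) with (INR (n - 1) / INR n); [apply cst_val_frac; lia|].
      rewrite minus_INR by lia. simpl. field. lra. }
  pose proof (Hneg (frac 1%nat)) as X. pose proof (Hr (frac 1%nat)).
  rewrite Eneg, unit_hom_frac, minus_INR in X by lia. simpl INR in X.
  apply (Rmult_eq_reg_l (INR n)); [rewrite Rinv_r by lra | lra].
  unfold Rmin in X. destruct (Rle_dec ((INR n - 1) * q (frac 1%nat)) 1); nra.
Qed.

End UnitHomConstants.

(* A constant [k/n] is an [n]-fold sum of [1/n], and [1/n] is pinned down by [~(1/n) = (n-1)/n]. *)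
Lemma unit_hom_cst_val (P : Pavelka) (q : P -> R) c v :
  unit_hom P q -> cst_val P c v -> q c = v.
Proof.
  intros Hq Hc. pose proof (cst_val_range _ _ _ Hc) as Hv.
  destruct Hc as [[z p] [_ [<- ->]]].
  rewrite Q2R_Qmake in Hv |- *. pose proof (INR_Pos_to_nat_ge1 p).
  assert (Hz : (0 <= z)%Z).
  { apply le_IZR. apply (Rmult_le_reg_r (/ INR (Pos.to_nat p))); [apply Rinv_0_lt_compat; lra|].
    unfold Rdiv in Hv. lra. }
  replace z with (Z.of_nat (Z.to_nat z)) in * by lia. rewrite <- INR_IZR_INZ in *.
  set (k := Z.to_nat z) in *.
  assert (Hk : (k <= Pos.to_nat p)%nat).
  { apply INR_le, (Rmult_le_reg_r (/ INR (Pos.to_nat p))); [apply Rinv_0_lt_compat; lra|].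
    rewrite Rinv_r; unfold Rdiv in Hv; lra. }
  rewrite (unit_hom_frac P q Hq p k Hk), (unit_hom_frac1 P q Hq p).
  unfold Rdiv in *. minmax_lra.
Qed.

Lemma quot_val_spec (P : Pavelka) (F : SpecM P) :
  unit_hom P (quot_val P F) /\ forall y, quot_val P F y = 1 <-> proj1_sig F y.
Proof.
  unfold quot_val. apply epsilon_spec. destruct F as [F HM]. simpl.
  set (h := fun x => epsilon (inhabits 0) (cut_value P F x)).
  assert (Hh : forall x, cut_value P F x (h x)).
  { intros x. apply epsilon_spec, cut_value_exists, HM. }
  assert (Hval : forall x v, cut_value P F x v -> h x = v).
  { intros x v. apply (cut_value_unique P F HM), Hh. }
  exists h. split; [split; [|split; [|split]]|].
  - intros x. apply (Hh x).
  - intros x y. apply Hval, (cut_value_oplus P F HM); apply Hh.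
  - intros x. apply Hval, (cut_value_neg P F), Hh.
  - apply Hval, (cut_value_zero P F HM).
  - intros y. rewrite <- (cut_value_one_iff P F HM y). split.
    + intros E. rewrite <- E. apply Hh.
    + apply Hval.
Qed.

Section NaturalEmbedding.
Variable P : Pavelka.
Implicit Types a b c x : P.

Lemma natemb_range x F : 0 <= natemb P x F <= 1.
Proof. apply (proj1 (quot_val_spec P F)). Qed.

Lemma natemb_mvmul a b F : natemb P (mvmul P a b) F = luk (natemb P a F) (natemb P b F).
Proof. apply unit_hom_mvmul, quot_val_spec. Qed.

Lemma natemb_cst_val c u F : cst_val P c u -> natemb P c F = u.
Proof. apply unit_hom_cst_val, quot_val_spec. Qed.

Lemma natemb_mvle a b F : mvle P a b -> natemb P a F <= natemb P b F.
Proof. apply unit_hom_mvle, quot_val_spec. Qed.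

End NaturalEmbedding.

Section Homomorphisms.
Variables A B : MVAlg.
Variable f : A -> B.
Hypothesis Hf : mv_hom A B f.

Lemma mv_hom_one : f (one A) = one B.
Proof. destruct Hf as [_ [Hneg H0]]. unfold one. now rewrite Hneg, H0. Qed.

Lemma mv_hom_mvmul x y : f (mvmul A x y) = mvmul B (f x) (f y).
Proof. destruct Hf as [Hplus [Hneg _]]. unfold mvmul. now rewrite Hneg, Hplus, !Hneg. Qed.

Lemma mv_hom_mvle x y : mvle A x y -> mvle B (f x) (f y).
Proof.
  destruct Hf as [Hplus [Hneg _]]. unfold mvle. intros Hxy.
  rewrite <- Hneg, <- Hplus, Hxy. apply mv_hom_one.
Qed.

Lemma mv_hom_kernel_maximal : simple_mv B -> maximal_filter A (fun x => f x = one B).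
Proof.
  intros [Hnontriv Hsimple].
  assert (Hker : is_filter A (fun x => f x = one B)).
  { split; [|split].
    - apply mv_hom_one.
    - intros x y Hx Hxy. apply mvle1. rewrite <- Hx. now apply mv_hom_mvle.
    - intros x y Hx Hy. rewrite mv_hom_mvmul, Hx, Hy. apply mvmul1. }
  split; [split; [exact Hker|] |].
  { destruct Hf as [_ [_ H0]]. rewrite H0. exact Hnontriv. }
  intros G [[G1 [G2 G3]] Gproper] Hsub x Gx.
  set (H := fun b => exists y, G y /\ mvle B (f y) b).
  assert (HH : is_filter B H).
  { split; [|split].
    - exists (one A). split; [exact G1|]. rewrite mv_hom_one. apply mvle_refl.
    - intros a b [y [Gy Ly]] Hab. exists y. split; [exact Gy | eapply mvle_trans; eauto].
    - intros a b [y [Gy Ly]] [z [Gz Lz]]. exists (mvmul A y z).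
      split; [now apply G3 | rewrite mv_hom_mvmul; now apply mvle_mul2]. }
  destruct (Hsimple H HH) as [Hall|Hall].
  - apply Hall. exists x. split; [exact Gx | apply mvle_refl].
  - exfalso. destruct (Hall (zero B)) as [y [Gy Ly]]. apply mvle0 in Ly.
    apply Gproper. rewrite <- (mvmulN A y). apply G3; [exact Gy|]. apply Hsub.
    destruct Hf as [_ [Hneg _]]. rewrite Hneg, Ly. reflexivity.
Qed.

End Homomorphisms.

(* Each factor map of a subdirect representation has a maximal kernel, and the value
   [1] is detected by [quot_val] at that maximal filter. *)
Lemma semisimple_natemb_reflect (P : Pavelka) (a b : P) : semisimple_mv P ->
  (forall F : SpecM P, natemb P a F <= natemb P b F) -> mvle P a b.
Proof.
  intros [I [B [f [Hsimple [Hhom [_ Hsep]]]]]] Hle.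
  unfold mvle. fold (mvimp P a b). apply Hsep. intros i.
  rewrite mv_hom_one by apply Hhom.
  set (F := exist _ _ (mv_hom_kernel_maximal P (B i) (f i) (Hhom i) (Hsimple i)) : SpecM P).
  destruct (quot_val_spec P F) as [Hq Hone]. apply (Hone (mvimp P a b)).
  rewrite unit_hom_mvimp by exact Hq. specialize (Hle F). unfold natemb in Hle.
  pose proof (proj1 Hq a). pose proof (proj1 Hq b). unfold Rimp. minmax_lra.
Qed.

Lemma inf01_spec {X : Type} (f : X -> R) : (forall i, 0 <= f i <= 1) ->
  0 <= inf01 f <= 1 /\ (forall i, inf01 f <= f i) /\
  (forall s, 0 <= s <= 1 -> (forall i, s <= f i) -> s <= inf01 f).
Proof.
  intros Hf. unfold inf01. apply epsilon_spec.
  set (E := fun y => y = -1 \/ exists i, y = - f i).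
  destruct (completeness E) as [m [Hub Hlub]].
  - exists 0. intros y [->|[i ->]]; [lra | pose proof (Hf i); lra].
  - exists (-1). now left.
  - exists (- m). assert (Hm1 : -1 <= m) by (apply Hub; now left).
    assert (Hm0 : m <= 0) by (apply Hlub; intros y [->|[i ->]]; [lra | pose proof (Hf i); lra]).
    split; [lra|split].
    + intros i. assert (- f i <= m) by (apply Hub; right; eauto). lra.
    + intros s Hs Hsi. assert (m <= - s); [|lra].
      apply Hlub. intros y [->|[i ->]]; [lra | pose proof (Hsi i); lra].
Qed.

Lemma Rimp_range a b : 0 <= a <= 1 -> 0 <= b <= 1 -> 0 <= Rimp a b <= 1.
Proof. intros. unfold Rimp. minmax_lra. Qed.

Section Polars.
Variable X : Type.
Variable J : X -> R.
Hypothesis HJ : forall i, 0 <= J i <= 1.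
Implicit Types x : X -> R.

(* [dI I x g = polar (fun m => I m g) x] and [hI I y m = polar (I m) y] hold by conversion. *)
Definition polar x : R := inf01 (fun i => Rimp (x i) (J i)).

Section Range.
Variable x : X -> R.
Hypothesis Hx : forall i, 0 <= x i <= 1.

Let polar_spec := inf01_spec (fun i => Rimp (x i) (J i)) (fun i => Rimp_range _ _ (Hx i) (HJ i)).

Lemma polar_range : 0 <= polar x <= 1.
Proof. apply polar_spec. Qed.

Lemma polar_le i : polar x <= Rimp (x i) (J i).
Proof. apply polar_spec. Qed.

Lemma le_polar s : 0 <= s <= 1 -> (forall i, s <= Rimp (x i) (J i)) -> s <= polar x.
Proof. apply polar_spec. Qed.

Lemma polar_eq1 : (forall i, x i <= J i) -> polar x = 1.
Proof.
  intros HxJ. apply Rle_antisym; [apply polar_range|].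
  apply le_polar; [lra|]. intros i. specialize (HxJ i). unfold Rimp. minmax_lra.
Qed.

End Range.

Lemma polar_antitone x x' : (forall i, 0 <= x i <= 1) -> (forall i, 0 <= x' i <= 1) ->
  (forall i, x i <= x' i) -> polar x' <= polar x.
Proof.
  intros Hx Hx' Hle. apply le_polar; [exact Hx | now apply polar_range|].
  intros i. pose proof (polar_le x' Hx' i). pose proof (Hle i). pose proof (HJ i).
  unfold Rimp in *. minmax_lra.
Qed.

Lemma polar_luk x r : (forall i, 0 <= x i <= 1) -> 0 <= r <= 1 ->
  luk r (polar (fun i => luk r (x i))) <= polar x.
Proof.
  intros Hx Hr.
  assert (Hrx : forall i, 0 <= luk r (x i) <= 1) by (intros i; pose proof (Hx i); unfold luk; minmax_lra).
  pose proof (polar_range _ Hrx). pose proof (polar_le _ Hrx) as Hle.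
  set (p := polar (fun i => luk r (x i))) in *.
  apply le_polar; [exact Hx | unfold luk; minmax_lra|].
  intros i. specialize (Hle i). pose proof (Hx i). pose proof (HJ i).
  unfold Rimp, luk in *. minmax_lra.
Qed.

End Polars.

Lemma hI_dI_luk {M G : Type} (I : M -> G -> R) (a : M -> R) r m :
  (forall m g, 0 <= I m g <= 1) -> (forall m, 0 <= a m <= 1) -> 0 <= r <= 1 ->
  luk r (hI I (dI I a) m) <= hI I (dI I (fun m => luk r (a m))) m.
Proof.
  intros HI Ha Hr.
  set (a' := fun m => luk r (a m)).
  assert (Ha' : forall m, 0 <= a' m <= 1) by (intros m'; pose proof (Ha m'); unfold a', luk; minmax_lra).
  set (y := dI I a). set (y' := dI I a').
  assert (Hy : forall g, 0 <= y g <= 1) by (intros g; apply (polar_range _ (fun m => I m g)); auto).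
  assert (Hy' : forall g, 0 <= y' g <= 1) by (intros g; apply (polar_range _ (fun m => I m g)); auto).
  assert (Hry' : forall g, 0 <= luk r (y' g) <= 1)
    by (intros g; pose proof (Hy' g); unfold luk; minmax_lra).
  assert (Hshift : forall g, luk r (y' g) <= y g)
    by (intros g; apply (polar_luk _ (fun m => I m g)); auto).
  pose proof (polar_antitone _ (I m) (HI m) _ _ Hry' Hy Hshift).
  pose proof (polar_luk _ (I m) (HI m) y' r Hy' Hr).
  pose proof (polar_range _ (I m) (HI m) y Hy).
  pose proof (polar_range _ (I m) (HI m) _ Hry').
  change (luk r (polar _ (I m) y) <= polar _ (I m) y'). unfold luk in *. minmax_lra.
Qed.

Lemma le_Rimp_of_rational_luk d v w : d <= 1 -> 0 <= v <= 1 -> 0 <= w <= 1 ->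
  (forall r, inQ01 r -> Q2R r < d -> luk (Q2R r) v <= w) -> v <= Rimp d w.
Proof.
  intros Hd Hv Hw H. apply Rnot_lt_le. intros Hlt. unfold Rimp in Hlt.
  destruct (Q_dense (Rmax 0 (w + 1 - v)) d) as [r Hr]; [minmax_lra|].
  assert (Hr01 : inQ01 r) by (unfold inQ01; minmax_lra).
  specialize (H r Hr01 ltac:(lra)). unfold luk in H. minmax_lra.
Qed.

Section ClosureOperator.
Variable P : Pavelka.
Hypothesis Hss : semisimple_mv P.
Variable O : P -> P.
Hypothesis HO : closure_op P O.

Definition closure_context (F : SpecM P) (g : P) : R := natemb P (O g) F.

Lemma closure_context_range F g : 0 <= closure_context F g <= 1.
Proof. apply natemb_range. Qed.

Lemma hI_dI_le_natemb_closure x F :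
  hI closure_context (dI closure_context (natemb P x)) F <= natemb P (O x) F.
Proof.
  destruct HO as [_ [Hext _]].
  assert (Hx : forall m, 0 <= natemb P x m <= 1) by (intros; apply natemb_range).
  assert (Hd : forall g, 0 <= dI closure_context (natemb P x) g <= 1)
    by (intros g; apply (polar_range _ (fun m => closure_context m g)); auto using closure_context_range).
  assert (Hd1 : dI closure_context (natemb P x) x = 1).
  { apply (polar_eq1 _ (fun m => closure_context m x)); auto using closure_context_range.
    intros m. now apply natemb_mvle. }
  pose proof (polar_le _ (closure_context F) (closure_context_range F) _ Hd x) as Hle.
  change (hI closure_context (dI closure_context (natemb P x)) F
    <= Rimp (dI closure_context (natemb P x) x) (natemb P (O x) F)) in Hle.
  rewrite Hd1 in Hle. pose proof (natemb_range P (O x) F). unfold Rimp in Hle. minmax_lra.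
Qed.

(* If [r . x <= O g] then [r . O x <= O (r . x) <= O g]: this is where compatibility enters. *)
Lemma natemb_closure_le_hI_dI x F :
  (forall (y : P) r, inQ01 r -> mvle P (mvmul P (cst P r) (O y)) (O (mvmul P (cst P r) y))) ->
  natemb P (O x) F <= hI closure_context (dI closure_context (natemb P x)) F.
Proof.
  destruct HO as [Hmono [_ Hidem]]. intros Hcompat.
  assert (Hx : forall m, 0 <= natemb P x m <= 1) by (intros; apply natemb_range).
  assert (Hd : forall g, 0 <= dI closure_context (natemb P x) g <= 1)
    by (intros g; apply (polar_range _ (fun m => closure_context m g)); auto using closure_context_range).
  apply (le_polar _ (closure_context F) (closure_context_range F) _ Hd); [apply natemb_range|].
  intros g. apply le_Rimp_of_rational_luk; [apply Hd | apply natemb_range | apply natemb_range|].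
  intros r Hr Hrd.
  assert (Hrx : mvle P (mvmul P (cst P r) x) (O g)).
  { apply semisimple_natemb_reflect; [exact Hss|]. intros m.
    rewrite natemb_mvmul, (natemb_cst_val P _ _ m (cst_val_cst P r Hr)).
    assert (Hdm : dI closure_context (natemb P x) g <= Rimp (natemb P x m) (closure_context m g))
      by exact (polar_le _ (fun m => closure_context m g) (fun m => closure_context_range m g) _ Hx m).
    pose proof (Hx m). pose proof (natemb_range P (O g) m).
    unfold closure_context, Rimp, luk in *. minmax_lra. }
  assert (Hrox : mvle P (mvmul P (cst P r) (O x)) (O g)).
  { eapply mvle_trans; [apply Hcompat, Hr|]. rewrite <- (Hidem g). now apply Hmono. }
  apply (natemb_mvle P _ _ F) in Hrox.
  rewrite natemb_mvmul, (natemb_cst_val P _ _ F (cst_val_cst P r Hr)) in Hrox. exact Hrox.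
Qed.

End ClosureOperator.

Theorem theorem17 (A : Pavelka) (hss : semisimple_mv A) (O : A -> A)
  (hO : closure_op A O) :
  (forall (x : A) (r : Q), inQ01 r ->
     mvle A (mvmul A (cst A r) (O x)) (O (mvmul A (cst A r) x)))
  <->
  (exists (G : Type) (I : SpecM A -> G -> R),
     (forall m g, 0 <= I m g <= 1) /\
     forall x : A, natemb A (O x) = hI I (dI I (natemb A x))).
Proof.
  split.
  - intros Hcompat. exists (car A), (closure_context A O).
    split; [apply closure_context_range|]. intros x. apply functional_extensionality. intros F.
    apply Rle_antisym.
    + now apply natemb_closure_le_hI_dI.
    + now apply hI_dI_le_natemb_closure.
  - intros [G [I [HI Heq]]] x r Hr. apply semisimple_natemb_reflect; [exact hss|]. intros F.
    assert (Hval : forall y m, natemb A (mvmul A (cst A r) y) m = luk (Q2R r) (natemb A y m)).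
    { intros y m. now rewrite natemb_mvmul, (natemb_cst_val A _ _ m (cst_val_cst A r Hr)). }
    rewrite Hval, (Heq x), (Heq (mvmul A (cst A r) x)).
    replace (natemb A (mvmul A (cst A r) x)) with (fun m => luk (Q2R r) (natemb A x m))
      by (apply functional_extensionality; intros m; now rewrite Hval).
    apply hI_dI_luk; [exact HI | intros; apply natemb_range | exact Hr].
Qed.
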